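(* Let $q$ be a power of an odd prime and let $S_j=\{x\in\mathbb F_q^d: x_1^2+\cdots+x_d^2=j\}$ with $j\ne0$. Then: (1) if $d\ge2$ is even, $S_j$ contains an affine subspace $H$ with $|H|=q^{(d-2)/2}$; (2) if $d=4k+1$ ($k$ a positive integer) and $j$ is not a square, $S_j$ contains an affine subspace $H$ with $|H|=q^{(d-3)/2}$; (3) if $d=4k+1$ and $j$ is a square, $S_j$ contains an affine subspace $H$ with $|H|=q^{(d-1)/2}$; (4) if $d=4k-1$ ($k$ a positive integer) and $-j$ is not a square, $S_j$ contains an affine subspace $H$ with $|H|=q^{(d-3)/2}$; (5) if $d=4k-1$ and $-j$ is a square, $S_j$ contains an affine subspace $H$ with $|H|=q^{(d-1)/2}$.
   Context: Squares refer to squares in $\mathbb F_q^*$. *)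

From HB Require Import structures.
From mathcomp Require Import all_boot all_order all_algebra all_field.
Set Implicit Arguments. Unset Strict Implicit. Unset Printing Implicit Defensive.
Import GRing.Theory.
Local Open Scope ring_scope.

(* Vectors of F_q^d are row vectors 'rV[F]_d; coordinates x_1..x_d are x 0 i. *)

Definition sphere (F : finFieldType) (d : nat) (j : F) : {set 'rV[F]_d} :=
  [set x : 'rV[F]_d | \sum_(i < d) x ord0 i ^+ 2 == j].

Definition is_square (F : finFieldType) (j : F) : Prop :=
  exists y : F, y ^+ 2 = j.

Definition contains_affine_subspace (F : finFieldType) (d : nat)
    (S : {set 'rV[F]_d}) (m : nat) : Prop :=
  exists (a : 'rV[F]_d) (V : {vspace 'rV[F]_d}),
    let H := [set x : 'rV[F]_d | x - a \in V] in
    H \subset S /\ #|H| = (#|F| ^ m)%N.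

From HB Require Import structures.
From mathcomp Require Import all_boot all_order all_algebra all_field.
From mathcomp Require Import fingroup cyclic zify ring.
Import GRing.Theory.
Local Open Scope ring_scope.

(* Every element of a finite field is a sum of two squares, because the squares
   make up more than half of the field; in particular a^2 + b^2 = -1 for some
   a, b.  The rows (1, 0, a, b) and (0, 1, b, -a) then span a plane of F^4 on
   which x_1^2 + ... + x_4^2 vanishes identically, so appending four
   coordinates to a flat lying on a sphere raises its dimension by two and
   keeps the radius.  It remains to start from a point of S_j in F^2 or F^3, the
   point s of S_j in F^1 when j = s^2, the line (0, cb, -ca) + F(1, a, b) on the
   sphere of radius -c^2 in F^3, and a line on S_j in F^4 obtained from it via
   j = ((j+1)/2)^2 - ((j-1)/2)^2. *)

Lemma two_neq0_odd_card (F : finFieldType) : odd #|F| -> 2%:R != 0 :> F.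
Proof.
apply: contraL => /eqP two0.
have ch2 : 2%N \in [pchar F] by apply/andP; split; last exact/eqP.
rewrite -dvdn2 -(order_pprimeChar (oner_neq0 (pPrimeCharType ch2))) -cardsT.
exact: order_dvdG (in_setT _).
Qed.

Lemma card_sqr_fiber (F : finFieldType) (t : F) :
  (#|[set x : F | x ^+ 2 == t ^+ 2]| + (t ^+ 2 == 0%R) <= 2)%N.
Proof.
have -> : [set x | x ^+ 2 == t ^+ 2] = [set t; - t].
  by apply/setP => x; rewrite !inE eqf_sqr.
rewrite cards2 sqrf_eq0; have [->|nz_t] := eqVneq t 0; first by rewrite oppr0 eqxx.
by rewrite addn0; case: (_ != _).
Qed.

Lemma card_squares_gt_half (F : finFieldType) : (#|F| < 2 * #|[set x ^+ 2 | x : F]|)%N.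
Proof.
set S := [set _ | _ in _].
have fibers : #|F| = (\sum_(s in S) #|[set x | x ^+ 2 == s]|)%N.
  rewrite -sum1_card (partition_big (fun x => x ^+ 2) (mem S)) => [|x _].
    by apply: eq_bigr => s _; rewrite sum1dep_card.
  exact: imset_f.
have zero_bound : (\sum_(s in S) (s == 0%R))%N = 1%N.
  have S0 : 0 \in S by apply/imsetP; exists 0; rewrite ?expr0n.
  by rewrite (bigD1 0) //= big1 ?eqxx // => s /andP[_ /negbTE->].
have : (\sum_(s in S) (#|[set x | x ^+ 2 == s]| + (s == 0%R))
          <= \sum_(s in S) 2)%N.
  by apply: leq_sum => _ /imsetP[t _ ->]; exact: card_sqr_fiber.
by rewrite big_split /= -fibers zero_bound sum_nat_const addn1 mulnC.
Qed.

Lemma sum_two_squares (F : finFieldType) (c : F) : exists x y : F, x ^+ 2 + y ^+ 2 = c.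
Proof.
set S := [set x ^+ 2 | x : F]; set T := [set c - s | s in S].
have /card_gt0P[z] : (0 < #|S :&: T|)%N.
  have : (#|F| < #|S :|: T| + #|S :&: T|)%N.
    rewrite cardsUI [#|T|]card_imset ?addnn -?mul2n ?card_squares_gt_half //.
    exact: subrI.
  by rewrite lt0n; apply: contraTneq => ->; rewrite addn0 -leqNgt max_card.
rewrite inE => /andP[/imsetP[x _ ->] /imsetP[_ /imsetP[y _ ->] e]].
by exists x, y; rewrite e subrK.
Qed.

Section SphereFlats.

Set Implicit Arguments.
Unset Strict Implicit.

Variable F : fieldType.

Definition sqnorm n (x : 'rV[F]_n) : F := \sum_(i < n) x 0 i ^+ 2.

Definition sphere_flat n (j : F) m : Prop :=
  exists (a : 'rV[F]_n) (M : 'M[F]_(m, n)),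
    row_free M /\ forall y : 'rV_m, sqnorm (a + y *m M) = j.

Definition row2 (x1 x2 : F) : 'rV[F]_2 := \row_k [:: x1; x2]`_k.

Lemma sqnorm_mx n (x : 'rV[F]_n) : sqnorm x = (x *m x^T) 0 0.
Proof. by rewrite !mxE; apply: eq_bigr => i _; rewrite mxE expr2. Qed.

Lemma sqnorm_row_mx n1 n2 (u : 'rV[F]_n1) (v : 'rV[F]_n2) :
  sqnorm (row_mx u v) = sqnorm u + sqnorm v.
Proof. by rewrite !sqnorm_mx tr_row_mx mul_row_col mxE. Qed.

Lemma row2_mulT x1 x2 y1 y2 :
  row2 x1 x2 *m (row2 y1 y2)^T = (x1 * y1 + x2 * y2)%:M.
Proof.
by apply/matrixP => i i'; rewrite !ord1 !mxE big_ord_recl big_ord1 !mxE.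
Qed.

Lemma row_free_row_mx1 m p (N : 'M[F]_(m, p)) : row_free (row_mx 1%:M N).
Proof.
by apply/row_freeP; exists (col_mx 1%:M 0); rewrite mul_row_col mulmx0 addr0 mulmx1.
Qed.

Lemma row_mx1_isotropic m p (N : 'M[F]_(m, p)) :
  N *m N^T = - 1%:M -> row_mx 1%:M N *m (row_mx 1%:M N)^T = 0.
Proof. by move=> NNT; rewrite tr_row_mx mul_row_col trmx1 mulmx1 NNT subrr. Qed.

Lemma sphere_flat_row_mx n1 n2 j1 j2 m1 m2 :
  sphere_flat n1 j1 m1 -> sphere_flat n2 j2 m2 ->
  sphere_flat (n1 + n2) (j1 + j2) (m1 + m2).
Proof.
move=> [a1 [M1 [free1 on1]]] [a2 [M2 [free2 on2]]].
exists (row_mx a1 a2), (block_mx M1 0 0 M2); split.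
  by rewrite /row_free rank_diag_block_mx (eqP free1) (eqP free2).
move=> y; rewrite -(hsubmxK y) mul_row_block !mulmx0 addr0 add0r.
by rewrite add_row_mx sqnorm_row_mx on1 on2.
Qed.

Lemma sphere_flat_sqr c : sphere_flat 1 (c ^+ 2) 0.
Proof.
exists (const_mx c), 0; split; first by rewrite /row_free mxrank0.
by move=> y; rewrite mulmx0 addr0 /sqnorm big_ord1 mxE.
Qed.

Lemma sphere_flat_isotropic n m (a : 'rV[F]_n) (M : 'M[F]_(m, n)) :
  row_free M -> M *m M^T = 0 -> a *m M^T = 0 -> sphere_flat n (sqnorm a) m.
Proof.
move=> freeM MMT aMT; exists a, M; split=> // y.
have MaT : M *m a^T = 0 by rewrite -[M]trmxK -trmx_mul aMT trmx0.
rewrite !sqnorm_mx raddfD /= trmx_mul !(mulmxDl, mulmxDr) !mulmxA aMT.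
by rewrite -!(mulmxA y M) MaT MMT !(mulmx0, mul0mx) !addr0.
Qed.

Variables a b : F.
Hypothesis sqr_ab : a ^+ 2 + b ^+ 2 = -1.

Let u := row2 a b.

Let uuT : u *m u^T = - 1%:M.
Proof. by rewrite row2_mulT -!expr2 sqr_ab raddfN. Qed.

Lemma sphere_flat_plane : sphere_flat 4 0 2.
Proof.
pose w := row2 b (- a).
have NNT : col_mx u w *m (col_mx u w)^T = - 1%:M.
  rewrite tr_col_mx mul_col_row uuT !row2_mulT scalar_mx_block opp_block_mx oppr0.
  rewrite mulrN mulNr mulrNN [b * a]mulrC subrr [b * b + _]addrC -!expr2 sqr_ab.
  by rewrite raddf0 raddfN.
have := sphere_flat_isotropic (row_free_row_mx1 _) (row_mx1_isotropic NNT)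
                              (mul0mx _ _).
by rewrite /sqnorm big1 // => i _; rewrite mxE expr0n.
Qed.

Lemma sphere_flat_line3 c : sphere_flat 3 (- c ^+ 2) 1.
Proof.
pose v := row2 (c * b) (- (c * a)).
have avMT : row_mx 0 v *m (row_mx 1%:M u)^T = 0.
  rewrite tr_row_mx mul_row_col mul0mx add0r row2_mulT.
  by rewrite (_ : _ + _ = 0) ?raddf0 //; ring.
have -> : - c ^+ 2 = sqnorm (row_mx (0 : 'rV_1) v).
  rewrite sqnorm_row_mx !sqnorm_mx mul0mx row2_mulT !mxE mulr1n add0r.
  by rewrite -[LHS]mulrN1 -sqr_ab; ring.
exact: sphere_flat_isotropic (row_free_row_mx1 u) (row_mx1_isotropic uuT) avMT.
Qed.

Lemma sphere_flat_add_planes n j m t :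
  sphere_flat n j m -> sphere_flat (n + 4 * t) j (m + 2 * t).
Proof.
move=> flat; elim: t => [|t IH]; first by rewrite !muln0 !addn0.
have := sphere_flat_row_mx IH sphere_flat_plane; rewrite addr0.
by rewrite !mulnSr !addnA.
Qed.

Lemma sphere_flat_line4 j : 2%:R != 0 :> F -> sphere_flat 4 j 1.
Proof.
move=> two_nz; pose x := (j + 1) / 2%:R; pose y := (j - 1) / 2%:R.
have := sphere_flat_row_mx (sphere_flat_line3 y) (sphere_flat_sqr x).
by rewrite (_ : _ + _ = j) //; rewrite /x /y; field.
Qed.

End SphereFlats.

Lemma sphere_flat_contains (F : finFieldType) n (j : F) m :
  sphere_flat n j m -> contains_affine_subspace (sphere n j) m.
Proof.
move=> [a [M [freeM onM]]].
exists a, (limg (linfun (mulmxr M))).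
have -> : [set x | x - a \in limg (linfun (mulmxr M))]
          = [set a + y *m M | y : 'rV[F]_m].
  apply/setP => x; rewrite inE; apply/memv_imgP/imsetP => -[y _ e].
    by exists y => //; rewrite lfunE /= in e; rewrite -e addrC subrK.
  by exists y; rewrite ?memvf // lfunE /= e addrC addKr.
split.
  by apply/subsetP => _ /imsetP[y _ ->]; rewrite inE; apply/eqP; exact: onM.
rewrite card_imset ?card_mx ?mul1n // => y1 y2 /addrI.
exact: row_free_inj.
Qed.

Theorem lemma1p13 (F : finFieldType) (Hodd : odd #|F|) (j : F) (hj : j != 0) :
  (forall d : nat, (2 <= d)%N -> ~~ odd d ->
     contains_affine_subspace (sphere d j) ((d - 2) %/ 2)) /\
  (forall k d : nat, (0 < k)%N -> d = (4 * k + 1)%N -> ~ is_square j ->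
     contains_affine_subspace (sphere d j) ((d - 3) %/ 2)) /\
  (forall k d : nat, (0 < k)%N -> d = (4 * k + 1)%N -> is_square j ->
     contains_affine_subspace (sphere d j) ((d - 1) %/ 2)) /\
  (forall k d : nat, (0 < k)%N -> d = (4 * k - 1)%N -> ~ is_square (- j) ->
     contains_affine_subspace (sphere d j) ((d - 3) %/ 2)) /\
  (forall k d : nat, (0 < k)%N -> d = (4 * k - 1)%N -> is_square (- j) ->
     contains_affine_subspace (sphere d j) ((d - 1) %/ 2)).
Proof.
have [a [b sqr_ab]] := sum_two_squares F (-1).
have grow n m t d m' : sphere_flat n j m ->
    d = (n + 4 * t)%N -> m' = (m + 2 * t)%N ->
    contains_affine_subspace (sphere d j) m'.
  move=> flat -> ->; apply: sphere_flat_contains.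
  exact: sphere_flat_add_planes sqr_ab _ _ _ _ flat.
have flat2 : sphere_flat 2 j 0.
  have [x [y <-]] := sum_two_squares F j.
  exact: sphere_flat_row_mx (sphere_flat_sqr x) (sphere_flat_sqr y).
have flat4 := sphere_flat_line4 sqr_ab j (two_neq0_odd_card F Hodd).
have flat0 : sphere_flat 1 (0 : F) 0.
  by have := sphere_flat_sqr (0 : F); rewrite expr2 mulr0.
have flat5 : sphere_flat 5 j 1 by rewrite -[j]addr0; exact: sphere_flat_row_mx flat4 flat0.
have flat3 : sphere_flat 3 j 0 by rewrite -[j]addr0; exact: sphere_flat_row_mx flat2 flat0.
split=> [d d2 /negbTE even_d|].
  have := odd_double_half d; rewrite even_d add0n => d_half.
  have [t [->|->]] : exists t, d = (2 + 4 * t)%N \/ d = (4 + 4 * t)%N.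
    by exists ((d - 2) %/ 4)%N; lia.
    by apply: (grow _ _ t _ _ flat2); lia.
  by apply: (grow _ _ t _ _ flat4); lia.
split=> [k d k0 -> _|]; first by apply: (grow _ _ k.-1 _ _ flat5); lia.
split=> [k d k0 -> [s s_sqr]|].
  by apply: (grow 1%N 0%N k); [rewrite -s_sqr; exact: sphere_flat_sqr | lia..].
split=> [k d k0 -> _|k d k0 -> [s s_sqr]].
  by apply: (grow _ _ k.-1 _ _ flat3); lia.
apply: (grow 3%N 1%N k.-1); [rewrite -[j]opprK -s_sqr | lia..].
exact: sphere_flat_line3 sqr_ab s.
Qed.
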